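(* Let $x\in S_N$. Then $x$ contains a $[231]$-pattern if and only if $x$ has an unmatched ascent. Likewise, $x$ contains a $[312]$-pattern if and only if $x$ has an unmatched descent.
   Context: $S_N$ is generated by $s_1,\dots,s_{N-1}$; permutations are in one-line notation and composed as functions, $(uv)(j)=u(v(j))$, so $xs_i$ swaps the entries in positions $i,i+1$. $\operatorname{len}$ denotes Coxeter length (number of inversions). $y$ has a right descent at $i$ if $\operatorname{len}(ys_i)<\operatorname{len}(y)$, and $z$ has a left descent at $i$ if $\operatorname{len}(s_iz)<\operatorname{len}(z)$. $x$ has an unmatched ascent if there exist $i$ and $y,z\in S_N$ with $x=y\,s_is_{i+1}\,z$, $\operatorname{len}(x)=\operatorname{len}(y)+2+\operatorname{len}(z)$, $y$ has no right descents in $\{i,i+1\}$ and $z$ has no left descents in $\{i,i+1\}$. An unmatched descent is defined identically with $s_is_{i+1}$ replaced by $s_{i+1}s_i$. $x$ contains a pattern $\sigma\in S_3$ if some subsequence $x(a),x(b),x(c)$, $a<b<c$, is in the same relative order as $\sigma$. *)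

(* Permutations of S_N are elements of 'S_N = {perm 'I_N};
   positions and values are 0-indexed ('I_N = {0,...,N-1}). *)
From mathcomp Require Import all_boot all_order all_fingroup.
Set Implicit Arguments. Unset Strict Implicit. Unset Printing Implicit Defensive.

Section Defs.
Variable N : nat.

(* Composition as functions, as in the paper: (pcomp u v) j = u (v j).
   Note MathComp's group product satisfies (v * u)%g j = u (v j) (permM). *)
Definition pcomp (u v : 'S_N) : 'S_N := (v * u)%g.

(* Coxeter length = number of inversions. *)
Definition len (x : 'S_N) : nat :=
  #|[set p : 'I_N * 'I_N | (p.1 < p.2) && (x p.2 < x p.1)]|.

(* Simple transposition s_i swapping positions i and i+1 (0-indexed);
   the identity if i+1 is out of range (never used in that case). *)
Definition sgen (i : nat) : 'S_N :=
  match insub i, insub i.+1 with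
  | Some a, Some b => tperm a b
  | _, _ => 1%g
  end.

Definition right_descent (y : 'S_N) (i : nat) : bool :=
  len (pcomp y (sgen i)) < len y.

Definition left_descent (z : 'S_N) (i : nat) : bool :=
  len (pcomp (sgen i) z) < len z.

Definition unmatched_ascent (x : 'S_N) : Prop :=
  exists (i : nat) (y z : 'S_N),
    [/\ i.+2 < N,
        x = pcomp y (pcomp (pcomp (sgen i) (sgen i.+1)) z),
        len x = len y + 2 + len z,
        ~~ right_descent y i /\ ~~ right_descent y i.+1 &
        ~~ left_descent z i /\ ~~ left_descent z i.+1].

Definition unmatched_descent (x : 'S_N) : Prop :=
  exists (i : nat) (y z : 'S_N),
    [/\ i.+2 < N,
        x = pcomp y (pcomp (pcomp (sgen i.+1) (sgen i)) z),
        len x = len y + 2 + len z,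
        ~~ right_descent y i /\ ~~ right_descent y i.+1 &
        ~~ left_descent z i /\ ~~ left_descent z i.+1].

(* x contains the pattern sigma (a permutation of S_3 in one-line notation,
   given as the list [:: sigma 1; sigma 2; sigma 3]) if some subsequence
   x(a), x(b), x(c) with a < b < c is in the same relative order as sigma. *)
Definition contains_pattern (x : 'S_N) (sigma : seq nat) : Prop :=
  exists a b c : 'I_N,
    [/\ a < b, b < c &
        let t := [:: a; b; c] in
        forall p q : nat, p < 3 -> q < 3 ->
          (x (nth a t p) < x (nth a t q)) = (nth 0 sigma p < nth 0 sigma q)].

End Defs.

(* If x = y s_i s_{i+1} z is length-additive, with y increasing and z^-1 increasing on the
   positions i, i+1, i+2, then the positions z^-1(i) < z^-1(i+1) < z^-1(i+2) of x carry the
   values y(i+1), y(i+2), y(i): a 231 pattern.  Conversely, take a 231 occurrence a < b < c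
   with b as small as possible, and let z sort the positions as follows: first those before a
   or between a and c with value below x(a), then a, b, c, then all others.  Minimality of b
   makes every inversion of z, and of s_i s_{i+1} z, an inversion of x, so
   x = y s_i s_{i+1} z is length-additive for y := x (s_i s_{i+1} z)^-1.  The 312 case follows
   by inversion: x contains 312 iff x^-1 contains 231, and inverting a reduced factorisation
   exchanges unmatched ascents and descents. *)
From Pilot Require Import Defs.
From mathcomp Require Import all_boot all_order all_fingroup zify.
(* ssrfun also defines a [pcomp]; re-import Defs so that [pcomp] is composition of permutations. *)
Import Defs.
Set Implicit Arguments. Unset Strict Implicit. Unset Printing Implicit Defensive.

Section Permutations.
Variable N : nat.
Implicit Types x y u z : 'S_N.

Lemma pcompE u v (j : 'I_N) : pcomp u v j = u (v j).
Proof. by rewrite /pcomp permM. Qed.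

Lemma len_pcomp y u :
  (forall p q : 'I_N, p < q -> u q < u p -> y (u q) < y (u p)) ->
  len (pcomp y u) = len y + len u.
Proof.
move=> yu_inv; rewrite /len -(cardsID [set pq : 'I_N * 'I_N | u pq.2 < u pq.1]).
rewrite addnC; congr (_ + _); last first.
  apply: eq_card => -[p q]; rewrite !inE /= !pcompE.
  case pq: (p < q) => //=; case uqp: (u q < u p); last by rewrite andbF.
  by rewrite yu_inv.
pose f (pq : 'I_N * 'I_N) := (u pq.1, u pq.2).
have f_inj : injective f by move=> [p q] [p' q'] [] /perm_inj -> /perm_inj ->.
rewrite -[#|[set pq | _ & y _ < y _]|](card_preimset _ f_inj); apply: eq_card => -[p q].
rewrite !inE /= !pcompE.
have := yu_inv p q; have := yu_inv q p.
case: (ltngtP p q) => [||/val_inj->]; last by rewrite !ltnn.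
all: case: (ltngtP (u p) (u q)) => [||/val_inj/perm_inj e]; try lia.
all: by move: e => ->; rewrite ltnn.
Qed.

Lemma len_inv x : len x^-1%g = len x.
Proof.
pose f (pq : 'I_N * 'I_N) := (x^-1%g pq.2, x^-1%g pq.1).
have f_inj : injective f by move=> [p q] [p' q'] [] /perm_inj -> /perm_inj ->.
rewrite /len -[#|[set pq | _ & x _ < x _]|](card_preimset _ f_inj).
by apply: eq_card => -[p q]; rewrite !inE /= !permKV andbC.
Qed.

Lemma perm_eqn x (p q : 'I_N) : (x p == x q :> nat) = (p == q :> nat).
Proof. by rewrite !val_eqE (inj_eq perm_inj). Qed.

Lemma tperm_val (P Q j : 'I_N) :
  nat_of_ord (tperm P Q j) =
  if j == P :> nat then nat_of_ord Q else if j == Q :> nat then nat_of_ord P else nat_of_ord j.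
Proof.
rewrite !val_eqE; case: tpermP => [->|->|/eqP/negbTE-> /eqP/negbTE->]; rewrite ?eqxx //.
by case: eqP => [->|].
Qed.

Lemma tperm_succ_inversion (P Q p q : 'I_N) : Q = P.+1 :> nat ->
  p < q -> tperm P Q q < tperm P Q p -> p = P /\ q = Q.
Proof.
move=> PQ pq; rewrite !tperm_val => qp.
suff [/val_inj-> /val_inj->] : p = P :> nat /\ q = Q :> nat by [].
by move: qp; repeat case: ifP => ?; lia.
Qed.

Lemma len_tperm_succ (P Q : 'I_N) : Q = P.+1 :> nat -> len (tperm P Q) = 1.
Proof.
move=> PQ; rewrite /len -(cards1 (P, Q)); apply: eq_card => -[p q].
rewrite !inE /=; apply/idP/eqP => [/andP[pq /(tperm_succ_inversion PQ pq) [-> ->]] //|[-> ->]].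
by rewrite tpermL tpermR PQ !ltnSn.
Qed.

Lemma sgenE i (P Q : 'I_N) : P = i :> nat -> Q = i.+1 :> nat -> sgen N i = tperm P Q.
Proof. by move=> <- QP; rewrite /sgen -QP !valK. Qed.

Lemma sgenV i : (sgen N i)^-1%g = sgen N i.
Proof. by rewrite /sgen; case: insub => [a|]; [case: insub => [b|] | ]; rewrite ?tpermV ?invg1. Qed.

Lemma right_descentNE y (P Q : 'I_N) : Q = P.+1 :> nat ->
  ~~ right_descent y P = (y P < y Q).
Proof.
move=> PQ; rewrite /right_descent (sgenE (erefl : P = P :> nat) PQ) -leqNgt.
have len_tperm_ascent (y' : 'S_N) : y' P < y' Q ->
    len (pcomp y' (tperm P Q)) = (len y').+1.
  move=> y'PQ; rewrite len_pcomp ?len_tperm_succ ?addn1 // => p q pq.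
  by case/(tperm_succ_inversion PQ pq) => -> ->; rewrite tpermL tpermR.
case: (ltngtP (y P) (y Q)) => [yPQ|yQP|/val_inj/perm_inj e]; last by move: PQ; rewrite e; lia.
  by rewrite len_tperm_ascent ?leqnSn.
apply/negbTE; rewrite -ltnNge.
have -> : len y = len (pcomp (pcomp y (tperm P Q)) (tperm P Q)).
  by rewrite /pcomp mulgA tperm2 mul1g.
by rewrite (len_tperm_ascent (pcomp y _)) // !pcompE tpermL tpermR.
Qed.

Lemma left_descentE z i : left_descent z i = right_descent z^-1%g i.
Proof.
rewrite /left_descent /right_descent -(len_inv z) -(len_inv (pcomp _ z)).
by rewrite /pcomp invMg sgenV.
Qed.

End Permutations.

Section ThreeCycle.
Variables (N : nat) (P Q R : 'I_N).
Hypotheses (PQ : Q = P.+1 :> nat) (QR : R = Q.+1 :> nat).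

Definition cycle3 : 'S_N := pcomp (tperm P Q) (tperm Q R).

Lemma cycle3_val j : nat_of_ord (cycle3 j) =
  if j == P :> nat then nat_of_ord Q else if j == Q :> nat then nat_of_ord R
  else if j == R :> nat then nat_of_ord P else nat_of_ord j.
Proof.
rewrite pcompE; move: (tperm_val Q R j); move: (tperm Q R j) => t.
by rewrite tperm_val; repeat case: ifP => ?; lia.
Qed.

Lemma cycle3P : cycle3 P = Q.
Proof. by apply: val_inj; rewrite /= cycle3_val; repeat case: ifP => ?; lia. Qed.

Lemma cycle3Q : cycle3 Q = R.
Proof. by apply: val_inj; rewrite /= cycle3_val; repeat case: ifP => ?; lia. Qed.

Lemma cycle3R : cycle3 R = P.
Proof. by apply: val_inj; rewrite /= cycle3_val; repeat case: ifP => ?; lia. Qed.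

Lemma cycle3_ltn j k : ~~ ((j \in [:: P; Q; R]) && (k \in [:: P; Q; R])) ->
  (cycle3 j < cycle3 k) = (j < k).
Proof. by rewrite !inE -!val_eqE /= !cycle3_val; repeat case: ifP => ?; lia. Qed.

Lemma len_cycle3 : len cycle3 = 2.
Proof.
rewrite len_pcomp ?len_tperm_succ // => p q pq.
case/(tperm_succ_inversion QR pq) => -> ->; rewrite tpermL tpermR !tperm_val.
by repeat case: ifP => ?; lia.
Qed.

End ThreeCycle.

Section Patterns.
Variable N : nat.
Implicit Types x y z : 'S_N.

Lemma contains231P x : contains_pattern x [:: 2; 3; 1] <->
  exists a b c : 'I_N, [/\ a < b, b < c, x c < x a & x a < x b].
Proof.
split=> [[a [b [c [ab bc xpat]]]] | [a [b [c [ab bc xca xab]]]]].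
  by exists a, b, c; split=> //; [apply: (xpat 2 0) | apply: (xpat 0 1)].
by exists a, b, c; split=> // t [|[|[|p]]] [|[|[|q]]] //= _ _; lia.
Qed.

Lemma contains312P x : contains_pattern x [:: 3; 1; 2] <->
  exists a b c : 'I_N, [/\ a < b, b < c, x b < x c & x c < x a].
Proof.
split=> [[a [b [c [ab bc xpat]]]] | [a [b [c [ab bc xbc xca]]]]].
  by exists a, b, c; split=> //; [apply: (xpat 1 2) | apply: (xpat 2 0)].
by exists a, b, c; split=> // t [|[|[|p]]] [|[|[|q]]] //= _ _; lia.
Qed.

Lemma contains312_inv x :
  contains_pattern x [:: 3; 1; 2] <-> contains_pattern x^-1%g [:: 2; 3; 1].
Proof.
rewrite contains312P contains231P; split=> -[a [b [c [ab bc xpat1 xpat2]]]].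
  by exists (x b), (x c), (x a); rewrite !permK.
by exists (x^-1%g c), (x^-1%g a), (x^-1%g b); rewrite !permKV.
Qed.

Lemma unmatched_ascent_inv x : unmatched_ascent x -> unmatched_descent x^-1%g.
Proof.
move=> [i [y [z [iN -> lenx [yi yi1] [zi zi1]]]]].
exists i, z^-1%g, y^-1%g; split=> //.
- by rewrite /pcomp !invMg !sgenV !mulgA.
- by rewrite !len_inv lenx; lia.
- by rewrite -!left_descentE.
- by rewrite !left_descentE !invgK.
Qed.

Lemma unmatched_descent_inv x : unmatched_descent x -> unmatched_ascent x^-1%g.
Proof.
move=> [i [y [z [iN -> lenx [yi yi1] [zi zi1]]]]].
exists i, z^-1%g, y^-1%g; split=> //.
- by rewrite /pcomp !invMg !sgenV !mulgA.
- by rewrite !len_inv lenx; lia.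
- by rewrite -!left_descentE.
- by rewrite !left_descentE !invgK.
Qed.

Lemma unmatched_ascent_contains231 x :
  unmatched_ascent x -> contains_pattern x [:: 2; 3; 1].
Proof.
move=> [i [y [z [iN -> _ [yi yi1] [zi zi1]]]]].
pose P := Ordinal (ltnW (ltnW iN)); pose Q := Ordinal (ltnW iN); pose R := Ordinal iN.
have PQ : Q = P.+1 :> nat by []; have QR : R = Q.+1 :> nat by [].
rewrite (sgenE (erefl : P = i :> nat) PQ) (sgenE (erefl : Q = i.+1 :> nat) QR) -/(cycle3 P Q R).
rewrite -[i]/(nat_of_ord P) (right_descentNE _ PQ) in yi.
rewrite -[i.+1]/(nat_of_ord Q) (right_descentNE _ QR) in yi1.
rewrite -[i]/(nat_of_ord P) left_descentE (right_descentNE _ PQ) in zi.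
rewrite -[i.+1]/(nat_of_ord Q) left_descentE (right_descentNE _ QR) in zi1.
apply/contains231P; exists (z^-1%g P), (z^-1%g Q), (z^-1%g R).
by rewrite !(pcompE y) !(pcompE (cycle3 P Q R)) !permKV cycle3P ?cycle3Q ?cycle3R.
Qed.

End Patterns.

Section Ranking.
Variables (N : nat) (k : 'I_N -> nat).
Hypothesis k_inj : injective k.

Definition rank (p : 'I_N) : nat := #|[set q | k q < k p]|.

Lemma rank_lt p : rank p < N.
Proof.
rewrite /rank -[X in _ < X](card_ord N); apply: proper_card; apply/properP.
by split; [apply/subsetP | exists p; rewrite ?inE ?ltnn].
Qed.

Lemma rank_mono p q : k p < k q -> rank p < rank q.
Proof.
move=> kpq; apply: proper_card; apply/properP; split.
  by apply/subsetP => r; rewrite !inE => /ltn_trans; apply.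
by exists p; rewrite !inE ?ltnn.
Qed.

Lemma rank_ltn p q : (rank p < rank q) = (k p < k q).
Proof.
case: (ltngtP (k p) (k q)) => [/rank_mono //|/rank_mono qp|/k_inj-> ]; last exact: ltnn.
by apply/negbTE; rewrite -leqNgt ltnW.
Qed.

Lemma rank_succ p q : k p < k q -> (forall r, k p < k r -> k q <= k r) ->
  rank q = (rank p).+1.
Proof.
move=> kpq kq_next; rewrite /rank.
have := cardsU1 p [set r | k r < k p]; rewrite inE ltnn add1n => <-.
apply: eq_card => r; rewrite !inE.
case: (eqVneq r p) => [->|rp] //=.
case: (ltngtP (k r) (k p)) => [krp|kpr|/k_inj rp'].
- exact: ltn_trans kpq.
- by apply/negbTE; rewrite -leqNgt kq_next.
- by rewrite rp' eqxx in rp.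
Qed.

Lemma rank_inj : injective (fun p => Ordinal (rank_lt p)).
Proof.
move=> p q /(congr1 val) /= rpq; apply: k_inj.
by case: (ltngtP (k p) (k q)) => // /rank_mono; rewrite rpq ltnn.
Qed.

Definition rank_perm : 'S_N := perm rank_inj.

Lemma rank_permE p : rank_perm p = rank p :> nat.
Proof. by rewrite permE. Qed.

Lemma rank_perm_ltn p q : (rank_perm p < rank_perm q) = (k p < k q).
Proof. by rewrite !rank_permE rank_ltn. Qed.

End Ranking.

Lemma lex_ltn n g1 g2 r1 r2 : r1 < n -> r2 < n ->
  (g1 * n + r1 < g2 * n + r2) = (g1 < g2) || (g1 == g2) && (r1 < r2).
Proof.
move=> r1n r2n; case: (ltngtP g1 g2) => [g12|g21|->] /=; last by rewrite ltn_add2l.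
  have : g1.+1 * n <= g2 * n by rewrite leq_mul2r g12 orbT.
  rewrite mulSn; lia.
apply/negbTE; rewrite -leqNgt.
have : g2.+1 * n <= g1 * n by rewrite leq_mul2r g21 orbT.
rewrite mulSn; lia.
Qed.

Section Construction.
Variables (N : nat) (x : 'S_N) (a b c : 'I_N).
Hypotheses (ab : a < b) (bc : b < c) (xca : x c < x a) (xab : x a < x b).
Hypothesis b_min : forall q : 'I_N, a < q -> x a < x q -> b <= q.

Definition grade (p : 'I_N) : nat :=
  if (p < a) || (p < c) && (x p < x a) then 0
  else if [|| p == a :> nat, p == b :> nat | p == c :> nat] then 1 else 2.

Definition key (p : 'I_N) : nat := grade p * N + p.

Lemma key_ltn (p q : 'I_N) :
  (key p < key q) = (grade p < grade q) || (grade p == grade q) && (p < q).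
Proof. exact: lex_ltn. Qed.

Lemma key_inj : injective key.
Proof.
move=> p q kpq; apply: ord_inj; move: (key_ltn p q) (key_ltn q p); rewrite kpq ltnn; lia.
Qed.

Lemma key_inversion (p q : 'I_N) : p < q -> key q < key p -> x q < x p.
Proof.
move=> pq; rewrite key_ltn [q < p]ltnNge (ltnW pq) andbF orbF /grade.
have xpa := perm_eqn x p a; case: ifP => [low_q|_].
  by case: ifP => // not_low_p _; lia.
case: ifP => [/or3P[]/eqP/ord_inj qE|_]; last by case: ifP => //; case: ifP.
all: subst q; case: ifP => // not_low_p; case: ifP => // not_block_p _.
- lia.
- by have := @b_min p; lia.
- lia.
Qed.

Local Notation z := (rank_perm key_inj).
Local Notation P := (z a).
Local Notation Q := (z b).
Local Notation R := (z c).

Lemma z_consecutive : Q = P.+1 :> nat /\ R = Q.+1 :> nat.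
Proof.
split; rewrite !rank_permE; apply: (rank_succ key_inj) => [|r].
all: rewrite ?[key _ <= _]leqNgt !key_ltn /grade.
all: by repeat case: ifP => ?; lia.
Qed.

Lemma cycle3_z_inversion (p q : 'I_N) : p < q ->
  (cycle3 P Q R (z q) < cycle3 P Q R (z p)) =
  (z q < z p) || (q == c :> nat) && ((p == a :> nat) || (p == b :> nat)).
Proof.
have [PQ QR] := z_consecutive; have ord_eqE (i j : 'I_N) : (i == j) = (i == j :> nat) by [].
case: (boolP ((z q \in map z [:: a; b; c]) && (z p \in map z [:: a; b; c]))); last first.
  move=> not_block; rewrite cycle3_ltn //; move: not_block.
  by rewrite !(mem_map perm_inj) !inE !ord_eqE; lia.
rewrite !(mem_map perm_inj) !inE.
case/andP => /or3P[]/eqP-> /or3P[]/eqP->.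
all: rewrite ?(cycle3P PQ QR) ?(cycle3Q PQ QR) ?(cycle3R PQ QR); lia.
Qed.

Lemma cycle3_z_inversion_x (p q : 'I_N) : p < q ->
  cycle3 P Q R (z q) < cycle3 P Q R (z p) -> x q < x p.
Proof.
move=> pq; rewrite cycle3_z_inversion //.
case/orP=> [|/andP[/eqP/ord_inj-> /orP[]/eqP/ord_inj->]].
- by rewrite rank_perm_ltn; apply: key_inversion.
- exact: xca.
- exact: ltn_trans xab.
Qed.

Lemma len_cycle3_z : len (pcomp (cycle3 P Q R) z) = 2 + len z.
Proof.
have [PQ QR] := z_consecutive.
rewrite len_pcomp ?(len_cycle3 PQ QR) // => p q pq zqp.
by rewrite cycle3_z_inversion // zqp.
Qed.

Lemma unmatched_ascent_of_231 : unmatched_ascent x.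
Proof.
have [PQ QR] := z_consecutive.
pose u := pcomp (cycle3 P Q R) z; pose y := pcomp x u^-1%g.
have xE : x = pcomp y u by rewrite /y /pcomp mulKVg.
have y_u p : y (u p) = x p by rewrite pcompE permK.
have [uc ua ub] : [/\ u c = P, u a = Q & u b = R].
  by rewrite !(pcompE (cycle3 P Q R)) (cycle3P PQ QR) (cycle3Q PQ QR) (cycle3R PQ QR).
exists P, y, z; split.
- by rewrite -PQ -QR.
- by rewrite -PQ (sgenE (erefl : P = P :> nat) PQ) (sgenE (erefl : Q = Q :> nat) QR).
- rewrite {1}xE len_pcomp; first by rewrite /u len_cycle3_z addnA.
  by move=> p q pq; rewrite !y_u !(pcompE (cycle3 P Q R)); apply: cycle3_z_inversion_x.
- by rewrite -PQ (right_descentNE _ PQ) (right_descentNE _ QR) -uc -ua -ub !y_u.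
- rewrite -PQ !left_descentE (right_descentNE _ PQ) (right_descentNE _ QR).
  by rewrite !permK.
Qed.

End Construction.

Lemma contains231_min N (x : 'S_N) : contains_pattern x [:: 2; 3; 1] ->
  exists a b c : 'I_N, [/\ a < b, b < c, x c < x a, x a < x b &
    forall q : 'I_N, a < q -> x a < x q -> b <= q].
Proof.
move=> /contains231P [a [b0 [c [ab0 b0c xca xab0]]]].
pose above_a (q : 'I_N) := (a < q) && (x a < x q).
have above_b0 : above_a b0 by rewrite /above_a ab0 xab0.
have [b /andP[ab xab] b_min] := @arg_minnP _ b0 above_a (@nat_of_ord N) above_b0.
exists a, b, c; split=> // [|q aq xaq]; last by apply: b_min; rewrite /above_a aq xaq.
exact: leq_ltn_trans (b_min _ above_b0) b0c.
Qed.

Lemma contains231_unmatched_ascent N (x : 'S_N) :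
  contains_pattern x [:: 2; 3; 1] <-> unmatched_ascent x.
Proof.
split; last exact: unmatched_ascent_contains231.
move=> /contains231_min [a [b [c [ab bc xca xab b_min]]]].
exact: unmatched_ascent_of_231 ab bc xca xab b_min.
Qed.

Theorem mainTheorem11 (N : nat) (x : 'S_N) :
  (contains_pattern x [:: 2; 3; 1] <-> unmatched_ascent x) /\
  (contains_pattern x [:: 3; 1; 2] <-> unmatched_descent x).
Proof.
split; first exact: contains231_unmatched_ascent.
rewrite contains312_inv contains231_unmatched_ascent.
by split=> [/unmatched_ascent_inv | /unmatched_descent_inv]; rewrite ?invgK.
Qed.
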